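(* Let $m,n\ge 2$. The Hadamard product of two $m$th order $n$-dimensional complete Hankel tensors is a complete Hankel tensor.
   Context: For $w\in\mathbb{R}^n$, $w^m$ is the tensor with entries $w_{i_1}\cdots w_{i_m}$. A Vandermonde vector is $(1,u,u^2,\dots,u^{n-1})^\top$ with $u\in\mathbb{R}$. A real $m$th order $n$-dimensional tensor $\mathcal{A}$ is a complete Hankel tensor if it has a positive Vandermonde decomposition, i.e. $\mathcal{A}=\sum_{k=1}^r\alpha_k(u_k)^m$ with $\alpha_k>0$, $u_k=(1,u_k,\dots,u_k^{n-1})^\top$ Vandermonde vectors, and $u_1,\dots,u_r$ pairwise distinct. The Hadamard product of $\mathcal{A}=(a_{i_1\cdots i_m})$ and $\mathcal{B}=(b_{i_1\cdots i_m})$ is $(a_{i_1\cdots i_m}b_{i_1\cdots i_m})$. *)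

From HB Require Import structures.
From mathcomp Require Import all_boot all_order all_algebra.
From mathcomp Require Import reals.
Set Implicit Arguments. Unset Strict Implicit. Unset Printing Implicit Defensive.
Import Order.TTheory GRing.Theory Num.Theory.
Local Open Scope ring_scope.

Definition tensor (R : realType) (m n : nat) := ('I_m -> 'I_n) -> R.

Definition tpow (R : realType) (m n : nat) (w : 'I_n -> R) : tensor R m n :=
  fun idx => \prod_(k < m) w (idx k).

Definition vdm (R : realType) (n : nat) (u : R) : 'I_n -> R :=
  fun i => u ^+ (i : nat).

(* Positive Vandermonde decomposition: A = sum_{k=1}^r alpha_k (u_k)^m,
   alpha_k > 0, u_k pairwise distinct. *)
Definition complete_hankel (R : realType) (m n : nat) (A : tensor R m n) : Prop :=
  exists (r : nat) (alpha u : 'I_r -> R),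
    (0 < r)%N /\ (forall k, 0 < alpha k) /\ injective u /\
    A = (fun idx => \sum_(k < r) alpha k * @tpow R m n (@vdm R n (u k)) idx).

Definition hadamard (R : realType) (m n : nat) (A B : tensor R m n) : tensor R m n :=
  fun idx => A idx * B idx.

From mathcomp Require Import all_boot all_order all_algebra.
From mathcomp Require Import reals.
From Stdlib Require Import FunctionalExtensionality.
Import Order.TTheory GRing.Theory Num.Theory.
Local Open Scope ring_scope.

(* Expanding the product of A = sum_k a_k (u_k)^m and B = sum_l b_l (v_l)^m
   gives sum_(k,l) a_k b_l (u_k v_l)^m, since (u^m) .* (v^m) = (u v)^m for
   Vandermonde vectors.  The weights a_k b_l are positive; the nodes u_k v_l
   may coincide, and collapsing equal nodes by adding their weights yields a
   positive Vandermonde decomposition. *)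

Section CompleteHankelHadamard.

Variables (R : realType) (m n : nat).

Local Notation vpow u := (@tpow R m n (@vdm R n u)).

Lemma hadamard_tpow (w1 w2 : 'I_n -> R) :
  hadamard (@tpow R m n w1) (tpow w2) = tpow (fun i => w1 i * w2 i).
Proof.
by apply: functional_extensionality => idx; rewrite /hadamard /tpow -big_split.
Qed.

Lemma vdmM (x y : R) : @vdm R n (x * y) = (fun i => vdm x i * vdm y i).
Proof. by apply: functional_extensionality => i; rewrite /vdm exprMn. Qed.

Lemma hadamard_sum (I J : finType) (F : I -> tensor R m n) (G : J -> tensor R m n) :
  hadamard (fun idx => \sum_i F i idx) (fun idx => \sum_j G j idx) =
  (fun idx => \sum_(p : I * J) hadamard (F p.1) (G p.2) idx).
Proof.
apply: functional_extensionality => idx.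
rewrite /hadamard mulr_suml.
by under eq_bigr do rewrite mulr_sumr; rewrite pair_big.
Qed.

Lemma complete_hankel_pos_comb (J : finType) (c w : J -> R) :
  #|J| != 0%N -> (forall j, 0 < c j) ->
  complete_hankel (fun idx => \sum_j c j * vpow (w j) idx).
Proof.
move=> J_nonempty c_pos.
set s := undup [seq w j | j <- enum J].
have w_in j : w j \in s by rewrite mem_undup map_f ?mem_enum.
have s_uniq : uniq s by apply: undup_uniq.
pose node (j : J) : 'I_(size s) := Ordinal (etrans (index_mem _ _) (w_in j)).
exists (size s), (fun k => \sum_(j | node j == k) c j), (fun k => nth 0 s k).
split; last split; last split.
- case: (pickP J) J_nonempty => [j _ _ | J0]; first by have := w_in j; case: (s).
  by rewrite (eq_card0 J0).
- move=> k; have /mapP [j _ wj] : nth 0 s k \in [seq w j | j <- enum J].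
    by rewrite -mem_undup mem_nth.
  have node_j : node j = k by apply: val_inj; rewrite /= -wj index_uniq.
  rewrite (bigD1 j) ?node_j //= ltr_wpDr ?c_pos //.
  by apply: sumr_ge0 => i _; apply: ltW.
- by move=> k1 k2 /eqP; rewrite nth_uniq // => /eqP /val_inj.
apply: functional_extensionality => idx.
rewrite (partition_big node xpredT) //=; apply: eq_bigr => k _.
by rewrite mulr_suml; apply: eq_bigr => j /eqP <-; rewrite nth_index.
Qed.

Lemma complete_hankel_hadamard (A B : tensor R m n) :
  complete_hankel A -> complete_hankel B -> complete_hankel (hadamard A B).
Proof.
move=> [r [a [u [r_gt0 [a_pos [_ ->]]]]]] [r' [b [v [r'_gt0 [b_pos [_ ->]]]]]].
rewrite hadamard_sum.
have -> : (fun idx => \sum_(p : 'I_r * 'I_r')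
    hadamard (fun idx => a p.1 * vpow (u p.1) idx)
             (fun idx => b p.2 * vpow (v p.2) idx) idx) =
  (fun idx => \sum_(p : 'I_r * 'I_r')
    (a p.1 * b p.2) * vpow (u p.1 * v p.2) idx).
  apply: functional_extensionality => idx; apply: eq_bigr => p _.
  by rewrite vdmM -hadamard_tpow /hadamard mulrACA.
apply: complete_hankel_pos_comb => [|p]; last exact: mulr_gt0.
by rewrite card_prod !card_ord muln_eq0 (gtn_eqF r_gt0) (gtn_eqF r'_gt0).
Qed.

End CompleteHankelHadamard.

Theorem proposition3 (R : realType) (m n : nat) (A B : tensor R m n) :
  (2 <= m)%N -> (2 <= n)%N ->
  complete_hankel A -> complete_hankel B -> complete_hankel (hadamard A B).
Proof. by move=> _ _; apply: complete_hankel_hadamard. Qed.
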